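(* Let $a,b$ be integers with $0<b<a$, let $S=\langle a,a+1,\ldots,a+b\rangle$ with conductor $c$, and let $m\ge 2c-1$. Let $r$ be a positive integer, let $\mathrm h(r)$ be the unique integer $q$ with $q+\frac12 bq(q-1)\le r<1+q+\frac12 bq(q+1)$, and write $r=\mathrm h(r)+\frac12 b\mathrm h(r)(\mathrm h(r)-1)+k\mathrm h(r)+j$ with integers $-1\le k\le b-1$ and $0<j\le\mathrm h(r)$ (with $k=-1$ only when $r=\mathrm h(r)+\frac12 b\mathrm h(r)(\mathrm h(r)-1)$, and then $j=\mathrm h(r)$). If $M$ is an ordered $(S,m,r)$-amenable set, then $\sharp(M\cap[m,m+a+b))=(\mathrm h(r)-1)b+k+2$.
   Context: For $x\in S$, $\mathrm D(x)=\{\alpha\in S\mid x-\alpha\in S\}$. A set $M=\{m_1<\cdots<m_r\}\subseteq S$ with $2c-1\le m=m_1$ is $(S,m,r)$-amenable if $\mathrm D(m_i)\cap[m,\infty)\subseteq M$ for all $i$. The ground is $\{m,m+1,\ldots,m+a+b-1\}$, and the shadow of $M$ is $M\cap\{m,\ldots,m+a+b-1\}$. For a finite $M\subseteq S\cap[m,\infty)$, let $J$ be the set of $j\in\{0,\ldots,a-1\}$ such that $x-(m+b)=qa+j$ for some $x\in M$ and some integer $q\ge 0$; if $J\neq\emptyset$ let $j_0=\max J$ and let the wagon of $M$ be $W=\{x\in M\mid x-(m+b)=qa+j_0\text{ for some integer }q\}$. An element $P\in M$ is the pivot of $M$ if either $P<m+b$ and $P=\max M$, or $P=\max W$. An $(S,m,r)$-amenable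 set $M$ with pivot $P$ is ordered amenable if (i) its shadow is $\{m,m+1,\ldots,m+t\}$ for some integer $0\le t<a+b-1$, and (ii) whenever $s\in S\setminus M$ is such that $M\cup\{s\}$ is $(S,m,r+1)$-amenable with the same shadow as $M$, we have $s=P+a$. *)

From HB Require Import structures.
From mathcomp Require Import all_boot all_order all_algebra.
From mathcomp Require Import finmap.
Set Implicit Arguments. Unset Strict Implicit. Unset Printing Implicit Defensive.
Import Order.TTheory GRing.Theory Num.Theory.
Local Open Scope fset_scope.

Definition inS (a b n : nat) : Prop :=
  exists s : seq nat, all (fun g => (a <= g <= a + b)%N) s /\ sumn s = n.

Definition is_conductor (a b c : nat) : Prop :=
  (forall n, c <= n -> inS a b n) /\
  (forall c', (forall n, c' <= n -> inS a b n) -> c <= c').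

Definition inD (a b x alpha : nat) : Prop :=
  inS a b alpha /\ alpha <= x /\ inS a b (x - alpha).

Definition amenable (a b c m r : nat) (M : {fset nat}) : Prop :=
  [/\ #|` M| = r,
      (forall x, x \in M -> inS a b x),
      (m \in M /\ forall x, x \in M -> m <= x),
      2 * c - 1 <= m
    & (forall x alpha, x \in M -> inD a b x alpha -> m <= alpha -> alpha \in M)].

Definition shadow (a b m : nat) (M : {fset nat}) : {fset nat} :=
  [fset x in M | (m <= x < m + a + b)%N].

Definition inJ (a b m : nat) (M : {fset nat}) (j : nat) : Prop :=
  j < a /\ exists x q, x \in M /\ x = (m + b + q * a + j)%N.

Definition is_j0 (a b m : nat) (M : {fset nat}) (j0 : nat) : Prop :=
  inJ a b m M j0 /\ forall j, inJ a b m M j -> j <= j0.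

Definition inW (a b m : nat) (M : {fset nat}) (j0 x : nat) : Prop :=
  x \in M /\ exists q : int, (x%:Z = (m + b)%:Z + q * a%:Z + j0%:Z)%R.

Definition is_pivot (a b m : nat) (M : {fset nat}) (P : nat) : Prop :=
  P \in M /\
  (((P < m + b)%N /\ forall x, x \in M -> x <= P) \/
   (exists j0, is_j0 a b m M j0 /\ inW a b m M j0 P /\
               forall x, inW a b m M j0 x -> x <= P)).

Definition ordered_amenable (a b c m r : nat) (M : {fset nat}) : Prop :=
  amenable a b c m r M /\
  exists P, is_pivot a b m M P /\
    (exists t, (t < a + b - 1)%N /\
       forall x, (x \in shadow a b m M) = (m <= x <= m + t)%N) /\
    (forall s, inS a b s -> s \notin M ->
       amenable a b c m r.+1 (M `|` [fset s]) ->
       shadow a b m (M `|` [fset s]) = shadow a b m M ->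
       s = (P + a)%N).

From mathcomp Require Import all_boot all_algebra.
From mathcomp Require Import finmap zify.
Import Num.Theory.
Set Implicit Arguments. Unset Strict Implicit. Unset Printing Implicit Defensive.
Local Open Scope fset_scope.
Local Open Scope nat_scope.

(* An ordered amenable set M whose shadow is [m, m + t] is squeezed between
   two staircases: writing S_n for the set of m + q a + i with i < n and
   q b <= i, closure of M under subtracting generators gives M ⊆ S_(t+1),
   while orderedness (the only admissible one-point extension is pivot + a)
   gives S_t ∪ {m + t} ⊆ M.  As |S_n| = Σ_(i<n) (⌊i/b⌋ + 1) is strictly
   increasing in n, r fixes t, and the decomposition of r through h, k, j
   reads t = (h - 1) b + k + 1. *)

Definition stair (b n : nat) : nat := \sum_(i < n) (i %/ b).+1.

Lemma stairS b n : stair b n.+1 = stair b n + (n %/ b).+1.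
Proof. by rewrite /stair big_ord_recr. Qed.

Lemma leq_stair b : {homo stair b : n p / n <= p}.
Proof.
by apply: homo_leq => [//|n p q|n]; [exact: leq_trans | rewrite stairS leq_addr].
Qed.

Lemma stair_window_inj b r n p :
  stair b n < r <= stair b n.+1 -> stair b p < r <= stair b p.+1 -> n = p.
Proof.
move=> /andP [ltnr lern] /andP [ltpr lerp].
have [ltnp|ltpn|//] := ltngtP n p.
- by have := leq_stair b ltnp; lia.
- by have := leq_stair b ltpn; lia.
Qed.

Lemma stair_closed_form b h k : 0 < b -> k <= b ->
  2 * stair b (h * b + k) = b * h * (h + 1) + 2 * (h + 1) * k.
Proof.
move=> b_gt0; elim: h k => [|h IH] k.
  rewrite mul0n add0n; elim: k => [|k IHk] lekb; first by rewrite /stair big_ord0; lia.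
  by rewrite stairS divn_small ?mulnDr ?IHk; lia.
have stair_row : 2 * stair b (h.+1 * b) = b * h.+1 * (h.+1 + 1).
  by rewrite [h.+1 * b]mulSnr IH //; nia.
elim: k => [|k IHk] lekb; first by rewrite addn0 stair_row; lia.
rewrite addnS stairS !mulnDr IHk; last by lia.
by rewrite divnMDl // divn_small; [nia | lia].
Qed.

Lemma stair_window_decomposition b h k j r : 0 < b -> k <= b -> 0 < j <= h.+1 ->
  2 * r = b * h * (h + 1) + 2 * (h + 1) * k + 2 * j ->
  stair b (h * b + k) < r <= stair b (h * b + k).+1.
Proof.
move=> b_gt0 lekb j_range r_eq.
have := stair_closed_form h b_gt0 lekb.
have : h <= (h * b + k) %/ b by rewrite leq_divRL // leq_addr.
rewrite stairS; set s := stair _ _; set d := _ %/ _; lia.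
Qed.

Definition column (a b m i : nat) : {fset nat} :=
  [fset x in [seq m + q * a + i | q <- iota 0 (i %/ b).+1]].

Definition staircase (a b m n : nat) : {fset nat} :=
  \bigcup_(i <- iota 0 n) column a b m i.

Section Staircase.
Variables (a b m : nat).
Hypotheses (a_gt0 : 0 < a) (b_gt0 : 0 < b).

Lemma mem_column i x :
  reflect (exists2 q, q * b <= i & x = m + q * a + i) (x \in column a b m i).
Proof.
rewrite in_fset; apply: (iffP mapP) => [[q]|[q leqbi ->]].
  by rewrite mem_iota add0n ltnS leq_divRL // => /andP [_ leqbi] ->; exists q.
by exists q; rewrite // mem_iota add0n ltnS leq_divRL.
Qed.

Lemma mem_staircase n x :
  reflect (exists q, m + q * (a + b) <= x < m + q * a + n) (x \in staircase a b m n).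
Proof.
apply: (iffP (bigfcupP _ _ _ _)) => [[i /andP [] /[!mem_iota] i_lt _]|[q x_range]].
  by case/mem_column=> q leqbi ->; exists q; nia.
exists (x - (m + q * a)); first by rewrite mem_iota; lia.
by apply/mem_column; exists q; nia.
Qed.

Lemma card_column i : #|` column a b m i| = (i %/ b).+1.
Proof.
rewrite card_fseq undup_id ?size_map ?size_iota //.
rewrite map_inj_uniq ?iota_uniq // => q p /eqP.
by rewrite !eqn_add2r eqn_add2l eqn_pmul2r // => /eqP.
Qed.

Lemma addn_notin_staircase n : n < a + b -> m + n \notin staircase a b m n.
Proof. by move=> ltn_ab; apply/negP => /mem_staircase [[|p]]; nia. Qed.

Lemma staircaseS n : staircase a b m n.+1 = staircase a b m n `|` column a b m n.
Proof. by rewrite /staircase -addn1 iotaD big_cat big_seq1. Qed.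

(* A common point m + q a + n would lie in a row p > q of S_n, which forces
   a + p b <= n. *)
Lemma staircase_column_disjoint n : n < a + b ->
  [disjoint staircase a b m n & column a b m n].
Proof.
move=> ltn_ab; apply/fdisjointP => x /mem_staircase [p x_row].
apply/negP => /mem_column [q _ x_eq].
have ltqp : q < p by rewrite -(ltn_pmul2r a_gt0); lia.
nia.
Qed.

Lemma card_staircase n : n <= a + b -> #|` staircase a b m n| = stair b n.
Proof.
elim: n => [|n IH] le_nab; first by rewrite /staircase /stair big_nil big_ord0 cardfs0.
have := cardfsUI (staircase a b m n) (column a b m n).
move: (staircase_column_disjoint le_nab); rewrite /fdisjoint => /eqP ->.
by rewrite cardfs0 addn0 -staircaseS IH ?card_column ?stairS //; lia.
Qed.

End Staircase.

Lemma inS_gen a b g : a <= g <= a + b -> inS a b g.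
Proof. by move=> g_gen; exists [:: g]; rewrite /= g_gen addn0. Qed.

Lemma inD_subn_gen a b z alpha : inD a b z alpha ->
  alpha = z \/ exists2 g, a <= g <= a + b & inD a b (z - g) alpha.
Proof.
case=> S_alpha [le_alpha_z [[|g s] [] /=]]; first by left; lia.
move=> /andP [g_gen s_gen] sum_s; right; exists g => //.
by split=> //; split; [lia | exists s; split => //; lia].
Qed.

Lemma shadow_fsetU1 a b m M z : m + a + b <= z ->
  shadow a b m (M `|` [fset z]) = shadow a b m M.
Proof.
move=> le_z; apply/fsetP => x; rewrite !inE.
case: (x =P z) => [->|_]; last by rewrite orbF.
by rewrite ltnNge le_z !andbF.
Qed.

Section Amenable.
Variables (a b c m r : nat) (M : {fset nat}).
Hypotheses (conductor_c : is_conductor a b c) (amenM : amenable a b c m r M).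

Lemma amenable_inS n : m <= n -> inS a b n.
Proof.
by move=> le_mn; case: conductor_c amenM => S_ge _ [_ _ _ le_m _]; apply: S_ge; lia.
Qed.

Lemma amenable_subn_gen x g :
  x \in M -> a <= g <= a + b -> m + g <= x -> x - g \in M.
Proof.
case: amenM => _ _ _ _ closedM xM g_gen le_mgx.
apply: (closedM x) => //; last by lia.
split; first by apply: amenable_inS; lia.
by split; [lia | rewrite subKn; [exact: inS_gen | lia]].
Qed.

(* Closure at z: every alpha \in D(z) other than z lies in D(z - g) for a
   generator g, and z - g \in M. *)
Lemma amenable_fsetU1 z : z \notin M -> m + a + b <= z ->
  (forall g, a <= g <= a + b -> z - g \in M) ->
  amenable a b c m r.+1 (M `|` [fset z]).
Proof.
move=> zM le_z z_gen; case: amenM => cardM S_M [mM m_min] le_m closedM.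
split=> //.
- by rewrite fsetUC cardfsU1 zM cardM.
- by move=> x /[!inE] /orP [/S_M //|/eqP ->]; apply: amenable_inS; lia.
- by split=> [|x /[!inE] /orP [/m_min //|/eqP ->]]; rewrite ?inE ?mM //; lia.
move=> x alpha /[!inE] /orP [xM D_alpha le_m_alpha|/eqP -> D_alpha le_m_alpha].
  by rewrite (closedM x alpha).
case: (inD_subn_gen D_alpha) => [->|[g g_gen D'_alpha]]; first by rewrite eqxx orbT.
by rewrite (closedM (z - g) alpha) ?z_gen.
Qed.

Section Shadow.
Variable t : nat.
Hypothesis shadowE : forall x, (x \in shadow a b m M) = (m <= x <= m + t).

Lemma mem_shadow_interval y : y <= t -> m + y \in M.
Proof.
by move=> le_yt; have /[!inE] /andP [] : m + y \in shadow a b m M by rewrite shadowE; lia.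
Qed.

Lemma amenable_shadow_le x : x \in M -> x < m + a + b -> x <= m + t.
Proof.
case: amenM => _ _ [_ m_min] _ _ xM lt_x.
have : x \in shadow a b m M by rewrite !inE xM m_min.
by rewrite shadowE => /andP [].
Qed.

(* Strong induction: x - (a + b) sits in some row q; if x fails to sit in
   row q + 1, subtracting a suitable generator lands on m + q a + t + 1,
   which would need a later row, impossible while t + 1 < a + b. *)
Lemma amenable_sub_staircase : 0 < b < a -> t.+1 < a + b ->
  M `<=` staircase a b m t.+1.
Proof.
move=> /andP [b_gt0 lt_ba] lt_tab; have a_gt0 : 0 < a by lia.
apply/fsubsetP; elim/ltn_ind => x IH xM; apply/(mem_staircase _ a_gt0 b_gt0).
have [lt_x|le_x] := ltnP x (m + a + b).
  exists 0; case: amenM => _ _ [_ m_min] _ _.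
  by have := m_min x xM; have := amenable_shadow_le xM lt_x; lia.
have row_M y : y < x -> y \in M -> exists q, m + q * (a + b) <= y < m + q * a + t.+1.
  by move=> lt_yx /(IH _ lt_yx) /(mem_staircase _ a_gt0 b_gt0).
have [q row_q] : exists q, m + q * (a + b) <= x - (a + b) < m + q * a + t.+1.
  by apply: row_M; [lia | apply: amenable_subn_gen; lia].
have [lt_xa|le_xa] := ltnP (x - a) (m + q * a + t.+1).
  by exists q.+1; rewrite !mulSn; lia.
have [p row_p] : exists p, m + p * (a + b) <= m + q * a + t.+1 < m + p * a + t.+1.
  apply: row_M; first by lia.
  by rewrite -(@subKn (m + q * a + t.+1) x); [apply: amenable_subn_gen | ]; lia.
have ltqp : q < p by rewrite -(ltn_pmul2r a_gt0); lia.
nia.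
Qed.

(* In the wagon case P = m + b + Q a + j0, where t - b <= j0 because m + t
   puts t - b in J; the row bounds on P + a then give both Q < q and q <= Q. *)
Lemma pivot_addn_outside_staircase P q x : b <= t < a + b ->
  is_pivot a b m M P ->
  m + q.+1 * (a + b) <= x < m + q.+1 * a + t -> x <> P + a.
Proof.
move=> t_range [_ [[lt_P _]|[j0 [[[lt_j0 _] j0_max] [[_ [Q P_eq]] _]]]]] x_row x_eq.
  by nia.
have le_tj0 : t - b <= j0.
  apply: j0_max; split; first by lia.
  by exists (m + t), 0; split; [apply: mem_shadow_interval | lia].
have a_gt0 : 0 < a by lia.
have ltQq : (Q + 1 < q.+1%:Z)%R by rewrite -(ltr_pM2r (x := a%:Z)) //; lia.
have leqQ : (q%:Z <= Q)%R.
  by rewrite -(ler_pM2r (x := a%:Z)) //; nia.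
lia.
Qed.

(* Strong induction: if a point x of S_t were missing from M, all x - g
   would be in M, so adding x gives an admissible extension with the same
   shadow; hence x = pivot + a, which the pivot forbids. *)
Lemma ordered_staircase_sub P : 0 < b < a -> t < a + b ->
  is_pivot a b m M P ->
  (forall s, inS a b s -> s \notin M ->
     amenable a b c m r.+1 (M `|` [fset s]) ->
     shadow a b m (M `|` [fset s]) = shadow a b m M -> s = P + a) ->
  staircase a b m t `<=` M.
Proof.
move=> /andP [b_gt0 lt_ba] lt_tab pivotP orderedM; have a_gt0 : 0 < a by lia.
apply/fsubsetP; elim/ltn_ind => x IH /(mem_staircase _ a_gt0 b_gt0) [[|q] x_row].
  by rewrite -(subnKC (_ : m <= x)) ?mem_shadow_interval //; lia.
case xM: (x \in M) => //; exfalso.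
have x_gen g : a <= g <= a + b -> x - g \in M.
  move=> g_gen; apply: IH; first by lia.
  by apply/(mem_staircase _ a_gt0 b_gt0); exists q; nia.
have le_x : m + a + b <= x by nia.
apply: (pivot_addn_outside_staircase (q := q) _ pivotP x_row); first by nia.
apply: orderedM.
- by apply: amenable_inS; lia.
- by rewrite xM.
- exact: amenable_fsetU1 (negbT xM) le_x x_gen.
- exact: shadow_fsetU1.
Qed.

End Shadow.
End Amenable.

Lemma card_shadow_interval a b m M t :
  (forall x, (x \in shadow a b m M) = (m <= x <= m + t)) ->
  #|` shadow a b m M| = t.+1.
Proof.
move=> shadowE; have -> : shadow a b m M = [fset x in iota m t.+1].
  by apply/fsetP => x; rewrite shadowE in_fset mem_iota addnS ltnS.
by rewrite card_fseq undup_id ?iota_uniq // size_iota.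
Qed.

Lemma ordered_amenable_stair_window a b c m r M : 0 < b < a ->
  is_conductor a b c -> ordered_amenable a b c m r M ->
  exists t, #|` shadow a b m M| = t.+1 /\ stair b t < r <= stair b t.+1.
Proof.
move=> b_range conductor_c [amenM [P [pivotP [[t [lt_t shadowE]] orderedM]]]].
have [b_gt0 lt_ba] := andP b_range; have a_gt0 : 0 < a by lia.
exists t; split; first exact: card_shadow_interval.
have lt_tab : t.+1 < a + b by lia.
have sub_le := amenable_sub_staircase conductor_c amenM shadowE b_range lt_tab.
have sub_ge : (m + t) |` staircase a b m t `<=` M.
  rewrite fsubUset fsub1set (mem_shadow_interval shadowE) //=.
  apply: (ordered_staircase_sub conductor_c amenM shadowE b_range (ltnW lt_tab)
          pivotP).
  exact: orderedM.
have cardM : #|` M| = r by case: amenM.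
move: (fsubset_leq_card sub_le) (fsubset_leq_card sub_ge).
by rewrite cardfsU1 addn_notin_staircase ?card_staircase //; lia.
Qed.

Theorem corollary4p19 (a b c m r : nat) (M : {fset nat}) (h : nat) (k : int) (j : nat) :
  (0 < b)%N -> (b < a)%N ->
  is_conductor a b c ->
  (2 * c - 1 <= m)%N ->
  (0 < r)%N ->
  (2 * h + b * (h * (h - 1)) <= 2 * r < 2 + 2 * h + b * (h * (h + 1)))%N ->
  (-1 <= k <= b%:Z - 1)%R ->
  (0 < j <= h)%N ->
  ((2 * r)%:Z = (2 * h + b * (h * (h - 1)))%:Z + 2 * k * h%:Z + 2 * j%:Z)%R ->
  ordered_amenable a b c m r M ->
  ((#|` shadow a b m M|)%:Z = (h%:Z - 1) * b%:Z + k + 2)%R.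
Proof.
move=> b_gt0 lt_ba conductor_c _ _ _ k_range j_range r_eq orderedM.
have b_range : 0 < b < a by rewrite b_gt0.
have [t [-> window_t]] := ordered_amenable_stair_window b_range conductor_c orderedM.
have [k' k_eq] : exists k' : nat, k = (k'%:Z - 1)%R by exists `|(k + 1)%R|%N; lia.
subst k; case: h j_range r_eq => [|h] j_range; first by lia.
rewrite subn1 succnK => r_eq.
have window_hk : stair b (h * b + k') < r <= stair b (h * b + k').+1.
  by apply: (@stair_window_decomposition _ _ _ j) => //; lia.
by rewrite (stair_window_inj window_t window_hk); lia.
Qed.
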